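(* Let $N=2$, $v_1<v_2$, prior probabilities $p(v_1),p(v_2)>0$ summing to $1$, and $\lambda,\sigma_Z,T>0$. Let the signal be $\tilde z\sim N(0,\sigma_Z^2T)$ with the optimal posteriors $p(v_n|z)=e^{(v_nz+\mu_n)/\lambda}/\sum_{n'=1}^2e^{(v_{n'}z+\mu_{n'})/\lambda}$, where $(\mu_1,\mu_2)$ is chosen (uniquely up to a common additive constant) so that $\mathbb E[p(v_n|\tilde z)]=p(v_n)$ for $n=1,2$. Then the density of the conditional expected payoff $\mathbb E[\tilde v|\tilde z]=\sum_nv_np(v_n|\tilde z)$ is $$f_s(v)=\frac{\lambda}{\sigma_Z\sqrt T\,(v_2-v)(v-v_1)}\,\phi\Big(\frac{\lambda}{\sigma_Z\sqrt T(v_1-v_2)}\log\Big(\frac{v_2-v}{v-v_1}\Big)-\frac{\mu_1-\mu_2}{\sigma_Z\sqrt T(v_1-v_2)}\Big),\qquad v\in(v_1,v_2),$$ where $\phi$ is the standard normal density.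
   Context: These posteriors are the optimal posteriors of the informed trader's problem of maximizing expected Kyle–Back trading profit minus the mutual-information cost $\lambda I(\tilde s;\tilde v)$ when the normal signal $\tilde z$ is used. *)

From HB Require Import structures.
From mathcomp Require Import all_boot all_order all_algebra.
From mathcomp Require Import all_classical all_reals all_analysis.
Set Implicit Arguments. Unset Strict Implicit. Unset Printing Implicit Defensive.
Import Order.TTheory GRing.Theory Num.Theory.
Local Open Scope ring_scope.

Section defs.
Context {R : realType}.

Definition post_w (lam vn mun z : R) : R := expR ((vn * z + mun) / lam).

Definition post1 (lam v1 v2 mu1 mu2 z : R) : R :=
  post_w lam v1 mu1 z / (post_w lam v1 mu1 z + post_w lam v2 mu2 z).
Definition post2 (lam v1 v2 mu1 mu2 z : R) : R :=
  post_w lam v2 mu2 z / (post_w lam v1 mu1 z + post_w lam v2 mu2 z).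

Definition cond_exp (lam v1 v2 mu1 mu2 z : R) : R :=
  v1 * post1 lam v1 v2 mu1 mu2 z + v2 * post2 lam v1 v2 mu1 mu2 z.

Definition std_phi (x : R) : R := normal_pdf 0 1 x.

Definition f_s (lam sZ T v1 v2 mu1 mu2 v : R) : R :=
  lam / (sZ * Num.sqrt T * (v2 - v) * (v - v1)) *
  std_phi (lam / (sZ * Num.sqrt T * (v1 - v2)) * ln ((v2 - v) / (v - v1))
           - (mu1 - mu2) / (sZ * Num.sqrt T * (v1 - v2))).
End defs.

From HB Require Import structures.
From mathcomp Require Import all_boot all_order all_algebra.
From mathcomp Require Import all_classical all_reals all_analysis.
From mathcomp Require Import measurable_realfun ring.
Import Order.TTheory GRing.Theory Num.Theory.
Import numFieldNormedType.Exports.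
Local Open Scope classical_set_scope.
Local Open Scope ring_scope.

(* The posterior odds p(v1|z)/p(v2|z) are exp(((v1 - v2) z + mu1 - mu2)/lam), so
   E[v|z] = v1 + (v2 - v1)/(1 + odds z) is a smooth, strictly increasing bijection
   g of R onto ]v1, v2[ whose inverse is read off from ln (odds z), which is affine
   in z.  The claimed density is exactly the one satisfying
   f_s (g z) g'(z) = normal_pdf 0 (sZ sqrt T) z, so by the substitution formula the
   law of g(z) and f_s dv agree on every interval ]x, y], hence on all Borel sets. *)

Lemma finite_measure_ocitv_unique {R : realType}
    (P : {finite_measure set (measurableTypeR R) -> \bar R})
    (nu : {measure set (measurableTypeR R) -> \bar R}) :
    (forall x y, x < y -> P `]x, y]%classic = nu `]x, y]%classic) ->
  forall A, measurable A -> P A = nu A.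
Proof.
move=> Pnu A mA.
have := @measure_unique _ R (measurableTypeR R) (@ocitv R)
  (fun n => `]1 *- n, n%:R]%classic) erefl (@ocitvI R) (fun n => is_ocitv _ _)
  (bigcup_itvT false false) P nu.
apply => //.
- by move=> _ /ocitvP[->|[[x y] /= xy ->]]; rewrite ?measure0 ?Pnu.
- by move=> n; rewrite -ge0_fin_numE ?fin_num_measure.
Qed.

Section pushforward_density.
Context {R : realType}.
Variables (a b : R) (g h f p : R -> R).
Variable P : {finite_measure set (measurableTypeR R) -> \bar R}.
Hypotheses (g_lt : {homo g : x y / x < y}) (g_in : forall z, a < g z < b).
Hypotheses (g_derivable : forall z, derivable g z 1) (g'_cont : continuous (g^`())%classic).
Hypotheses (hK : {in `]a, b[, cancel h g}) (h_cont : {in `]a, b[, continuous h}).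
Hypotheses (f_cont : {in `]a, b[, continuous f}) (f_ge0 : {in `]a, b[, forall x, 0 <= f x}).
Hypothesis fg_density : forall z, f (g z) * (g^`())%classic z = p z.
Hypotheses (mp : measurable_fun setT p)
  (P_density : forall A, measurable A -> P A = (\int[lebesgue_measure]_(x in A) (p x)%:E)%E).

Let I : set R := `]a, b[.

Let g_ltE : {mono g : x y / x < y}. Proof. exact/leW_mono/le_mono. Qed.
Let g_leE : {mono g : x y / x <= y}. Proof. exact: le_mono. Qed.

Let g_cont : continuous g.
Proof. by move=> z; exact/differentiable_continuous/derivable1_diffP. Qed.

Let image_sub {x y v : R} : g x <= v -> v <= g y -> v \in `]a, b[.
Proof.
move=> xv vy; have /andP[ax _] := g_in x; have /andP[_ yb] := g_in y.
by rewrite in_itv /= (lt_le_trans ax xv) (le_lt_trans vy yb).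
Qed.

Let mf : measurable_fun I f.
Proof.
apply: open_continuous_measurable_fun; first exact: interval_open.
by move=> x; rewrite inE; exact: f_cont.
Qed.

Let mh : measurable_fun I h.
Proof.
apply: open_continuous_measurable_fun; first exact: interval_open.
by move=> x; rewrite inE; exact: h_cont.
Qed.

Lemma integral_image_itv x y : x <= y ->
  (\int[lebesgue_measure]_(v in `[g x, g y]) (f v)%:E =
   \int[lebesgue_measure]_(z in `[x, y]) (p z)%:E)%E.
Proof.
move=> xy.
have g_homo : {in `[x, y] &, {homo g : u v / u < v}} by move=> u v _ _; exact: g_lt.
have g'_cont_in : {in `]x, y[, continuous (g^`())%classic} by move=> z _; exact: g'_cont.
have g_LR : derivable_oo_LRcontinuous g x y.
  split; first by move=> z _; exact: g_derivable.
  + exact: cvg_at_right_filter (g_cont x).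
  + exact: cvg_at_left_filter (g_cont y).
have f_cont_image : {within `[g x, g y], continuous f}.
  apply: continuous_in_subspaceT => v; rewrite inE /= in_itv /= => /andP[xv vy].
  by apply: f_cont; exact: image_sub xv vy.
rewrite (integration_by_substitution_increasing xy g_homo g'_cont_in
  (cvgP _ (cvg_at_right_filter (g'_cont x))) (cvgP _ (cvg_at_left_filter (g'_cont y)))
  g_LR f_cont_image).
by apply: eq_integral => z _; rewrite -fg_density.
Qed.

Definition push_density (B : set (measurableTypeR R)) : \bar R :=
  (\int[lebesgue_measure]_(v in I `&` h @^-1` B) (f v)%:E)%E.

Let push_density0 : push_density set0 = 0%E.
Proof. by rewrite /push_density preimage_set0 setI0 integral_set0. Qed.

Let push_density_ge0 B : (0 <= push_density B)%E.
Proof. by apply: integral_ge0 => v [Iv _]; rewrite lee_fin f_ge0. Qed.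

(* Stated on [set R], convertible to [set (measurableTypeR R)], so that [mh]
   applies to the measurable sets [F n]. *)
Let push_density_sigma_additive :
  semi_sigma_additive (push_density : set R -> \bar R).
Proof.
move=> F mF tF _; rewrite /push_density.
have mIh n : measurable (I `&` h @^-1` F n) by apply: mh => //; exact: measurable_itv.
apply: cvg_toP.
  apply: is_cvg_ereal_nneg_natsum_cond => n _ _.
  by apply: integral_ge0 => v [Iv _]; rewrite lee_fin f_ge0.
rewrite preimage_bigcup setI_bigcupr ge0_integral_bigcup //=.
- apply/measurable_EFinP; apply: (measurable_funS _ _ mf) => //; first exact: measurable_itv.
  by move=> v [n _ []].
- by move=> v [n _ [Iv _]]; rewrite lee_fin f_ge0.
- apply: trivIset_setIl => i j _ _ [v [hi hj]]; apply: tF => //.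
  by exists (h v).
Qed.

HB.instance Definition _ := isMeasure.Build _ _ _ push_density
  push_density0 push_density_ge0 push_density_sigma_additive.

Let I_preimage_ocitv x y : I `&` h @^-1` `]x, y] = `]g x, g y]%classic.
Proof.
apply/seteqP; split => v /=.
  move=> -[Iv]; rewrite in_itv /= => /andP[xhv hvy].
  by rewrite in_itv /= -[v](hK _ Iv) g_ltE xhv g_leE hvy.
rewrite in_itv /= => /andP[gxv vgy].
have Iv := image_sub (ltW gxv) vgy.
by split => //; rewrite /= in_itv /= -g_ltE -g_leE (hK _ Iv) gxv vgy.
Qed.

Let push_density_ocitv x y : x < y -> P `]x, y]%classic = push_density `]x, y]%classic.
Proof.
move=> xy.
have mp_oc : measurable_fun `]x, y] (EFin \o p).
  by apply/measurable_EFinP; exact: measurable_funTS.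
have mf_oc : measurable_fun `]g x, g y] (EFin \o f).
  apply/measurable_EFinP; apply: (measurable_funS _ _ mf) => //; first exact: measurable_itv.
  by move=> v /=; rewrite in_itv /= => /andP[/ltW gxv vgy]; exact: image_sub gxv vgy.
rewrite /push_density I_preimage_ocitv P_density // !integral_itv_obnd_cbnd //.
by rewrite integral_image_itv // ltW.
Qed.

Theorem pushforward_density A : measurable A ->
  P (g @^-1` A) = (\int[lebesgue_measure]_(v in A `&` `]a, b[) (f v)%:E)%E.
Proof.
move=> mA.
have mgA : measurable (g @^-1` A).
  by rewrite -[_ @^-1` _]setTI; exact: (continuous_measurable_fun g_cont).
rewrite (@finite_measure_ocitv_unique _ P push_density push_density_ocitv _ mgA) /push_density.
congr (integral _ _ _); apply/seteqP; split => v /= [].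
- by move=> Iv; rewrite (hK _ Iv).
- by move=> Av Iv; rewrite (hK _ Iv).
Qed.

End pushforward_density.

Lemma normal_pdf_scale {R : realType} (m s x : R) : 0 < s ->
  normal_pdf 0 1 ((x - m) / s) / s = normal_pdf m s x.
Proof.
move=> s_gt0; have s_neq0 : s != 0 by rewrite gt_eqF.
rewrite !normal_pdfE ?oner_neq0 //.
have peakE : normal_peak s = normal_peak 1 / s.
  rewrite /normal_peak expr1n mul1r -mulrnAr sqrtrM ?sqr_ge0 // sqrtr_sqr gtr0_norm //.
  by rewrite invfM mulrC.
have funE : normal_fun 0 1 ((x - m) / s) = normal_fun m s x.
  rewrite /normal_fun subr0 expr1n expr_div_n -[(s ^+ 2) *+ 2]mulr_natr.
  by congr expR; field.
by rewrite /= peakE funE mulrAC.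
Qed.

Section logistic_cond_exp.
Context {R : realType}.
Variables (lam v1 v2 mu1 mu2 : R).
Hypotheses (lam_gt0 : 0 < lam) (v12 : v1 < v2).

Local Notation g := (cond_exp lam v1 v2 mu1 mu2).

Definition odds (z : R) : R := expR ((v1 - v2) / lam * z + (mu1 - mu2) / lam).

Let lam_neq0 : lam != 0. Proof. by rewrite gt_eqF. Qed.
Let v21_neq0 : v2 - v1 != 0. Proof. by rewrite subr_eq0 gt_eqF. Qed.
Let v12_neq0 : v1 - v2 != 0. Proof. by rewrite subr_eq0 lt_eqF. Qed.

Lemma odds_gt0 z : 0 < odds z. Proof. exact: expR_gt0. Qed.

Let odds1_neq0 z : 1 + odds z != 0.
Proof. by rewrite gt_eqF // addr_gt0 ?odds_gt0. Qed.

Lemma cond_expE z : g z = v1 + (v2 - v1) / (1 + odds z).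
Proof.
rewrite /cond_exp /post1 /post2.
have -> : post_w lam v1 mu1 z = odds z * post_w lam v2 mu2 z.
  by rewrite /post_w /odds -expRD; congr expR; field.
have w_gt0 : 0 < post_w lam v2 mu2 z by exact: expR_gt0.
have := odds1_neq0 z; move: (odds_gt0 z) w_gt0.
set o := odds z; set w := post_w _ _ _ z => o_gt0 w_gt0 o1_neq0.
by field; rewrite o1_neq0 gt_eqF // addr_gt0 ?mulr_gt0.
Qed.

Lemma cond_exp_minus_v1 z : g z - v1 = (v2 - v1) / (1 + odds z).
Proof. by rewrite cond_expE addrC addKr. Qed.

Lemma v2_minus_cond_exp z : v2 - g z = (v2 - v1) * odds z / (1 + odds z).
Proof. by rewrite cond_expE; field; exact: odds1_neq0. Qed.

Lemma cond_exp_odds z : (v2 - g z) / (g z - v1) = odds z.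
Proof.
rewrite v2_minus_cond_exp cond_exp_minus_v1.
by field; rewrite odds1_neq0 v21_neq0.
Qed.

Lemma cond_exp_in z : v1 < g z < v2.
Proof.
have o_gt0 := odds_gt0 z.
rewrite -subr_gt0 cond_exp_minus_v1 -[g z < v2]subr_gt0 v2_minus_cond_exp.
by rewrite !divr_gt0 ?mulr_gt0 ?subr_gt0 ?addr_gt0.
Qed.

Lemma cond_exp_lt : {homo g : x y / x < y}.
Proof.
move=> x y xy; rewrite !cond_expE ltrD2l.
rewrite ltr_pM2l ?subr_gt0 // ltf_pV2 ?posrE ?addr_gt0 ?odds_gt0 // ltrD2l.
have k_lt0 : (v1 - v2) / lam < 0 by rewrite pmulr_llt0 ?invr_gt0 // subr_lt0.
by rewrite ltr_expR ltrD2r ltr_nM2l.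
Qed.

Definition cond_exp_inv (v : R) : R :=
  (lam * ln ((v2 - v) / (v - v1)) - (mu1 - mu2)) / (v1 - v2).

Let ratio_gt0 {v : R} : v1 < v -> v < v2 -> 0 < (v2 - v) / (v - v1).
Proof. by move=> v1v vv2; rewrite divr_gt0 ?subr_gt0. Qed.

Let continuous_ln_ratio {v : R} : v1 < v -> v < v2 ->
  {for v, continuous (fun v => ln ((v2 - v) / (v - v1)))}.
Proof.
move=> v1v vv2; apply: continuous_comp; last exact: continuous_ln (ratio_gt0 v1v vv2).
apply: continuousM; first by apply: continuousB; [exact: cvg_cst|exact: cvg_id].
apply: continuousV; first by rewrite subr_eq0 gt_eqF.
by apply: continuousB; [exact: cvg_id|exact: cvg_cst].
Qed.

Lemma cond_exp_invK : {in `]v1, v2[, cancel cond_exp_inv g}.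
Proof.
move=> v; rewrite in_itv /= => /andP[v1v vv2].
have odds_inv : odds (cond_exp_inv v) = (v2 - v) / (v - v1).
  rewrite /odds /cond_exp_inv.
  have -> : (v1 - v2) / lam * ((lam * ln ((v2 - v) / (v - v1)) - (mu1 - mu2)) / (v1 - v2))
      + (mu1 - mu2) / lam = ln ((v2 - v) / (v - v1)) by field; rewrite lam_neq0 v12_neq0.
  by rewrite lnK // posrE ratio_gt0.
have vv1_neq0 : v - v1 != 0 by rewrite subr_eq0 gt_eqF.
have odds1_inv : 1 + odds (cond_exp_inv v) = (v2 - v1) / (v - v1).
  by rewrite odds_inv; field.
by rewrite cond_expE odds1_inv; field; rewrite vv1_neq0 v21_neq0.
Qed.

Lemma continuous_cond_exp_inv : {in `]v1, v2[, continuous cond_exp_inv}.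
Proof.
move=> v; rewrite in_itv /= => /andP[v1v vv2].
change {for v, continuous cond_exp_inv}; rewrite /cond_exp_inv.
apply: continuousM; last exact: cvg_cst.
apply: continuousB; last exact: cvg_cst.
apply: continuousM; first exact: cvg_cst.
exact: continuous_ln_ratio v1v vv2.
Qed.

Definition cond_exp_deriv (z : R) : R :=
  (v2 - v1) ^+ 2 / lam * odds z / (1 + odds z) ^+ 2.

Lemma is_derive_odds (z : R) : is_derive z 1 odds (odds z * ((v1 - v2) / lam)).
Proof.
have lin : is_derive z 1 (fun y => (v1 - v2) / lam * y + (mu1 - mu2) / lam) ((v1 - v2) / lam).
  by apply: is_derive_eq; rewrite addr0 -[RHS]mulr1.
exact: is_derive1_comp (is_derive_expR _) lin.
Qed.

Lemma is_derive_cond_exp (z : R) : is_derive z 1 g (cond_exp_deriv z).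
Proof.
have -> : g = fun y => v1 + (v2 - v1) * (1 + odds y)^-1.
  by apply/funext => y; rewrite cond_expE.
have d_odds := is_derive_odds z.
have d_inv : is_derive z 1 (fun y => (1 + odds y)^-1)
    (- (1 + odds z) ^- 2 *: (odds z * ((v1 - v2) / lam))).
  apply: is_deriveV; first exact: odds1_neq0.
  by rewrite -[odds z * _]add0r; apply: is_deriveD.
apply: is_derive_eq; rewrite /cond_exp_deriv.
change ((0 + 1) * ((v2 - v1) * (- (1 + odds z) ^- 2 * (odds z * ((v1 - v2) / lam))))
  = (v2 - v1) ^+ 2 / lam * odds z / (1 + odds z) ^+ 2).
have := odds1_neq0 z.
by set o := odds z => o1_neq0; field; rewrite o1_neq0 lam_neq0.
Qed.

Lemma derive1_cond_exp : (g^`())%classic = cond_exp_deriv.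
Proof.
by apply/funext => z; rewrite derive1E; apply: derive_val; exact: is_derive_cond_exp.
Qed.

Lemma derivable_cond_exp (z : R) : derivable g z 1.
Proof. by apply: ex_derive; exact: is_derive_cond_exp. Qed.

Lemma continuous_odds : continuous odds.
Proof.
move=> z; apply/differentiable_continuous/derivable1_diffP.
by apply: ex_derive; exact: is_derive_odds.
Qed.

Lemma continuous_cond_exp_deriv : continuous cond_exp_deriv.
Proof.
move=> z; change {for z, continuous cond_exp_deriv}; rewrite /cond_exp_deriv.
apply: continuousM.
  by apply: continuousM; [exact: cvg_cst|exact: continuous_odds].
apply: continuousV; first by rewrite expf_neq0.
apply: (continuous_comp _ (@exprn_continuous _ 2 _)).
by apply: continuousD; [exact: cvg_cst|exact: continuous_odds].
Qed.

Section density.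
Variables (sZ T : R).
Hypothesis s_gt0 : 0 < sZ * Num.sqrt T.

Local Notation f := (f_s lam sZ T v1 v2 mu1 mu2).

Lemma f_s_ge0 : {in `]v1, v2[, forall v, 0 <= f v}.
Proof.
move=> v; rewrite in_itv /= => /andP[v1v vv2].
apply: mulr_ge0; last exact: normal_pdf_ge0.
apply: divr_ge0; first exact: ltW.
by apply: mulr_ge0; [apply: mulr_ge0; [exact: ltW|]|]; rewrite subr_ge0 ltW.
Qed.

Lemma continuous_f_s : {in `]v1, v2[, continuous f}.
Proof.
move=> v; rewrite in_itv /= => /andP[v1v vv2].
change {for v, continuous f}; rewrite /f_s /std_phi.
have s_neq0 : sZ * Num.sqrt T != 0 by rewrite gt_eqF.
apply: continuousM.
  apply: continuousM; first exact: cvg_cst.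
  apply: continuousV.
    by apply: mulf_neq0; [apply: mulf_neq0 => //|]; rewrite subr_eq0 gt_eqF.
  apply: continuousM; last by apply: continuousB; [exact: cvg_id|exact: cvg_cst].
  apply: continuousM; first exact: cvg_cst.
  by apply: continuousB; [exact: cvg_cst|exact: cvg_id].
apply: continuous_comp; last exact: (@continuous_normal_pdf R 0 1 (oner_neq0 _)).
apply: continuousB; last exact: cvg_cst.
apply: continuousM; first exact: cvg_cst.
exact: continuous_ln_ratio v1v vv2.
Qed.

Lemma f_s_change_of_variables z : f (g z) * cond_exp_deriv z = normal_pdf 0 (sZ * Num.sqrt T) z.
Proof.
rewrite /f_s cond_exp_odds {1}/odds expRK.
set s := sZ * Num.sqrt T; have s_neq0 : s != 0 by rewrite gt_eqF.
have argE : lam / (s * (v1 - v2)) * ((v1 - v2) / lam * z + (mu1 - mu2) / lam)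
    - (mu1 - mu2) / (s * (v1 - v2)) = (z - 0) / s.
  by field; rewrite s_neq0 v12_neq0 lam_neq0.
have jacobian : lam / (s * (v2 - g z) * (g z - v1)) * cond_exp_deriv z = s^-1.
  rewrite -mulrA v2_minus_cond_exp cond_exp_minus_v1 /cond_exp_deriv.
  have := odds1_neq0 z; have := odds_gt0 z.
  set o := odds z => o_gt0 o1_neq0.
  by field; rewrite s_neq0 lam_neq0 v21_neq0 o1_neq0 gt_eqF.
by rewrite argE mulrAC jacobian /std_phi mulrC normal_pdf_scale.
Qed.

End density.
End logistic_cond_exp.

Theorem corollary1 (R : realType) (v1 v2 p1 p2 lam sZ T mu1 mu2 : R) :
  v1 < v2 -> 0 < p1 -> 0 < p2 -> p1 + p2 = 1 ->
  0 < lam -> 0 < sZ -> 0 < T ->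
  (\int[normal_prob 0 (sZ * Num.sqrt T)]_z (post1 lam v1 v2 mu1 mu2 z)%:E)%E = p1%:E ->
  (\int[normal_prob 0 (sZ * Num.sqrt T)]_z (post2 lam v1 v2 mu1 mu2 z)%:E)%E = p2%:E ->
  forall A : set R, measurable A ->
    normal_prob 0 (sZ * Num.sqrt T) (cond_exp lam v1 v2 mu1 mu2 @^-1` A) =
    (\int[lebesgue_measure]_(v in A `&` `]v1, v2[) (f_s lam sZ T v1 v2 mu1 mu2 v)%:E)%E.
Proof.
move=> v12 _ _ _ lam_gt0 sZ_gt0 T_gt0 _ _.
have s_gt0 : 0 < sZ * Num.sqrt T by rewrite mulr_gt0 // sqrtr_gt0.
apply: (@pushforward_density _ v1 v2 (cond_exp lam v1 v2 mu1 mu2)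
  (cond_exp_inv lam v1 v2 mu1 mu2) _ (normal_pdf 0 (sZ * Num.sqrt T))).
- exact: cond_exp_lt.
- exact: cond_exp_in.
- exact: derivable_cond_exp.
- by rewrite derive1_cond_exp //; exact: continuous_cond_exp_deriv.
- exact: cond_exp_invK.
- exact: continuous_cond_exp_inv.
- exact: continuous_f_s.
- exact: f_s_ge0.
- by move=> z; rewrite derive1_cond_exp // f_s_change_of_variables.
- exact: measurable_normal_pdf.
- by [].
Qed.
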